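(* Let $\mathbb{F}$ be a field with a non-identity involution $x\mapsto x^\star$, $\mathbb{K}=\{x\in\mathbb{F}:x^\star=x\}$, $V$ an $n$-dimensional $\mathbb{F}$-vector space, and $b$ a non-degenerate Hermitian form on $V$ with Witt index $\nu$. Let $\mathcal{F}$ be a maximal partially complete $b$-singular flag of $V$. Then $\mathrm{WH}_{b,\mathcal{F}}$ is a $\mathbb{K}$-linear subspace of $\mathrm{End}_{\mathbb{F}}(V)$ with $\dim_{\mathbb{K}}\mathrm{WH}_{b,\mathcal{F}}=\nu(2n-2\nu-1)$.
   Context: A sesquilinear form $b$ on $V$ is linear in the second argument and satisfies $b(\alpha x+x',y)=\alpha^\star b(x,y)+b(x',y)$; it is Hermitian if $b(y,x)=b(x,y)^\star$; non-degenerate if $b(x,y)=0$ for all $x$ forces $y=0$. An $\mathbb{F}$-subspace $X$ is totally $b$-singular if $b(x,y)=0$ for all $x,y\in X$; the Witt index is the maximal $\mathbb{F}$-dimension of such a subspace. An $\mathbb{F}$-linear endomorphism $u$ is $b$-Hermitian if $b(u(x),y)=b(x,u(y))$ for all $x,y$; $\mathcal{H}_b$ is the set of these. A flag $(F_0,\dots,F_p)$ of $\mathbb{F}$-subspaces is partially complete if $\dim_{\mathbb{F}}F_i=i$, $b$-singular if $F_p$ is totally $b$-singular, maximal if $p=\nu$. $\mathrm{WH}_{b,\mathcal{F}}$ is the set of nilpotent $u\in\mathcal{H}_b$ with $u(F_i)\subseteq F_i$ for all $i$. *)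

(* V = 'rV[F]_n (row vectors); End_F(V) = 'M[F]_n acting on
   the right: u(x) := x *m u.  F-subspaces of V are row spaces of matrices. *)
From HB Require Import structures.
From mathcomp Require Import all_boot all_order all_algebra.
Set Implicit Arguments. Unset Strict Implicit. Unset Printing Implicit Defensive.
Import GRing.Theory.
Local Open Scope ring_scope.

Section Defs.
Variables (F : fieldType) (conj : F -> F) (n : nat).
Variable b : 'rV[F]_n -> 'rV[F]_n -> F.

Definition sesq_form : Prop :=
  (forall (a : F) x x' y, b (a *: x + x') y = conj a * b x y + b x' y) /\
  (forall (a : F) x y y', b x (a *: y + y') = a * b x y + b x y').

Definition herm_form : Prop := forall x y, b y x = conj (b x y).

Definition sesq_nondegenerate : Prop :=
  forall y, (forall x, b x y = 0) -> y = 0.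

Definition totally_singular m (X : 'M[F]_(m, n)) : Prop :=
  forall x y : 'rV[F]_n, (x <= X)%MS -> (y <= X)%MS -> b x y = 0.

Definition witt_index (nu : nat) : Prop :=
  (exists X : 'M[F]_n, totally_singular X /\ \rank X = nu) /\
  (forall X : 'M[F]_n, totally_singular X -> (\rank X <= nu)%N).

(* flag (F_0, ..., F_p), given as a nat-indexed family (only i <= p matter) *)
Definition is_flag (p : nat) (Fl : nat -> 'M[F]_n) : Prop :=
  forall i, (i < p)%N -> (Fl i <= Fl i.+1)%MS.

Definition partially_complete (p : nat) (Fl : nat -> 'M[F]_n) : Prop :=
  forall i, (i <= p)%N -> \rank (Fl i) = i.

Definition singular_flag (p : nat) (Fl : nat -> 'M[F]_n) : Prop :=
  totally_singular (Fl p).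

Definition maximal_pc_singular_flag (nu p : nat) (Fl : nat -> 'M[F]_n) : Prop :=
  [/\ is_flag p Fl, partially_complete p Fl, singular_flag p Fl & p = nu].

Definition b_hermitian (u : 'M[F]_n) : Prop :=
  forall x y, b (x *m u) y = b x (y *m u).

Definition mx_nilpotent (u : 'M[F]_n) : Prop := exists k : nat, u ^+ k = 0.

Definition WH (p : nat) (Fl : nat -> 'M[F]_n) (u : 'M[F]_n) : Prop :=
  [/\ mx_nilpotent u, b_hermitian u &
      forall i, (i <= p)%N -> (Fl i *m u <= Fl i)%MS].

Definition inK (k : F) : Prop := conj k = k.

Definition K_subspace (S : 'M[F]_n -> Prop) : Prop :=
  [/\ S 0, (forall u v, S u -> S v -> S (u + v)) &
      (forall k u, inK k -> S u -> S (k *: u))].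

Definition K_dim (S : 'M[F]_n -> Prop) (d : nat) : Prop :=
  exists B : 'I_d -> 'M[F]_n,
    [/\ forall i, S (B i),
        (forall c : 'I_d -> F, (forall i, inK (c i)) ->
           \sum_(i < d) c i *: B i = 0 -> forall i, c i = 0) &
        (forall u, S u -> exists c : 'I_d -> F,
           (forall i, inK (c i)) /\ u = \sum_(i < d) c i *: B i)].
End Defs.

From HB Require Import structures.
From mathcomp Require Import all_boot all_order all_algebra.
From mathcomp Require Import zify.
Set Implicit Arguments. Unset Strict Implicit. Unset Printing Implicit Defensive.
Import GRing.Theory.

(* Complete the maximal
   singular flag F_0 < ... < F_nu to the chain
     F_0 < ... < F_nu <= F_nu^perp < ... < F_0^perp = V
   of 2 nu + 2 subspaces.  A nilpotent Hermitian u stabilising the flag maps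
   each member of the chain into the previous one: inside the flag because u
   is nilpotent on each line F_(i+1)/F_i, at the middle step because
   b(x u^j, x u^j) = b(x, x u^(2j)) and F_nu is maximal totally singular, and
   beyond by taking orthogonals, since u is its own adjoint.  Conversely any
   self-adjoint u lowering the chain lies in WH.  In a basis adapted to the
   chain, lowering the chain means that the matrix of u is supported on a
   fixed staircase pattern, which has nu (2n - 2nu - 1) entries.  So the
   lowering maps form an F-space of that dimension, stable under the
   conjugate-linear involution u |-> adjoint u, and WH is its fixed part;
   Galois descent for the quadratic extension F/K gives the K-dimension. *)

(* Dimension of the j-th member (0 <= j <= 2 nu + 1) of the chain above. *)
Definition chain_dim (nu n j : nat) : nat :=
  if (j <= nu)%N then j else (n - ((nu + nu).+1 - j))%N.

(* Row r of a chain-lowering map, in an adapted basis, lives in the first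
   row_width r columns. *)
Definition row_width (nu n r : nat) : nat :=
  if (r < nu)%N then r else if (r < n - nu)%N then nu else r.

Lemma sum_ord_ltn k m : (\sum_(c < m) (c < k : nat))%N = minn k m.
Proof.
elim: m => [|m IH]; first by rewrite big_ord0 minn0.
by rewrite big_ord_recr /= IH; case: (ltnP m k) => hm /=; lia.
Qed.

Section RowWidth.
Variables nu n : nat.
Hypothesis nu2_le : (nu + nu <= n)%N.

Lemma row_width_leP r c : (r < n)%N ->
  (row_width nu n r <= c)%N <->
  exists j, [/\ (0 < j <= (nu + nu).+1)%N, (r < chain_dim nu n j)%N
             & (chain_dim nu n j.-1 <= c)%N].
Proof.
rewrite /row_width /chain_dim => rn; split => [|[j [/andP[j0 jN]]]]; last first.
  by case: ifP => ?; case: ifP => ?; case: ifP => ?; try case: ifP => ?; lia.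
case: ifP => r1; first by exists r.+1; split; do ?case: ifP => ?; lia.
case: ifP => r2 rc; first by exists nu.+1; split; do ?case: ifP => ?; lia.
by exists (r + nu + nu + 2 - n)%N; split; do ?case: ifP => ?; lia.
Qed.

Let width_sum k := (\sum_(r < k) row_width nu n r)%N.

Lemma width_sumS k : width_sum k.+1 = (width_sum k + row_width nu n k)%N.
Proof. by rewrite /width_sum big_ord_recr. Qed.

(* The partial sums are computed doubled, so that no halving occurs in nat. *)
Lemma width_sum_low k : (k <= nu)%N -> (2 * width_sum k + k = k * k)%N.
Proof.
elim: k => [|k IH] kn; first by rewrite /width_sum big_ord0.
rewrite width_sumS (_ : row_width nu n k = k); last by rewrite /row_width ifT //; lia.
by have := IH (ltnW kn); nia.
Qed.

Lemma width_sum_mid i : (nu + i <= n - nu)%N ->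
  (2 * width_sum (nu + i) + nu + nu * nu = 2 * nu * (nu + i))%N.
Proof.
elim: i => [|i IH] hi; first by rewrite addn0; have := width_sum_low (leqnn nu); nia.
rewrite addnS width_sumS (_ : row_width nu n (nu + i) = nu).
  by have := IH (ltac:(lia)); nia.
by rewrite /row_width ifF ?ifT //; lia.
Qed.

Lemma width_sum_high i : (n - nu + i <= n)%N ->
  (2 * width_sum (n - nu + i) + nu + nu * nu + (n - nu) * (n - nu) + (n - nu + i)
   = 2 * nu * (n - nu) + (n - nu + i) * (n - nu + i) + (n - nu))%N.
Proof.
elim: i => [|i IH] hi.
  rewrite addn0; have := @width_sum_mid (n - nu - nu); rewrite subnKC; last lia.
  by move=> /(_ (leqnn _)); nia.
rewrite addnS width_sumS (_ : row_width nu n (n - nu + i) = (n - nu + i)%N).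
  by have := IH (ltac:(lia)); set a := (n - nu)%N; nia.
by rewrite /row_width ifF ?ifF //; lia.
Qed.

Lemma sum_row_width :
  (\sum_(r < n) row_width nu n r)%N = (nu * (2 * n - 2 * nu - 1))%N.
Proof.
have := @width_sum_high nu; rewrite subnK; last lia.
move=> /(_ (leqnn _)); rewrite -/(width_sum n); set a := (n - nu)%N.
have -> : n = (a + nu)%N by rewrite /a subnK //; lia.
nia.
Qed.

End RowWidth.

Local Open Scope ring_scope.

Section MxvecFamily.
Variables (F : fieldType) (n : nat).

Definition mxvec_family m (x : 'I_m -> 'M[F]_n) : 'M[F]_(m, n * n) :=
  \matrix_i mxvec (x i).

Lemma mxvec_comb m (c : 'I_m -> F) (x : 'I_m -> 'M[F]_n) :
  mxvec (\sum_i c i *: x i) = \row_i c i *m mxvec_family x.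
Proof.
rewrite mulmx_sum_row linear_sum; apply: eq_bigr => i _.
by rewrite linearZ rowK mxE.
Qed.

Lemma sub_mxvec_familyP m (x : 'I_m -> 'M[F]_n) u :
  (mxvec u <= mxvec_family x)%MS <-> exists c, u = \sum_i c i *: x i.
Proof.
split=> [/submxP[v uv]|[c ->]]; last by rewrite mxvec_comb submxMl.
exists (v 0); apply: (can_inj mxvecK); rewrite mxvec_comb uv.
by congr (_ *m _); apply/rowP => i; rewrite mxE.
Qed.

Lemma row_free_mxvec_familyP m (x : 'I_m -> 'M[F]_n) :
  row_free (mxvec_family x) <->
  (forall c, \sum_i c i *: x i = 0 -> forall i, c i = 0).
Proof.
split=> [fr c /(congr1 mxvec) | H].
  rewrite mxvec_comb linear0 => /eqP; rewrite mulmx_free_eq0 // => /eqP /rowP H i.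
  by have := H i; rewrite !mxE.
apply: inj_row_free => v; rewrite (_ : v = \row_i v 0 i); last first.
  by apply/rowP => i; rewrite mxE.
rewrite -mxvec_comb => /eqP; rewrite mxvec_eq0 => /eqP /H v0.
by apply/rowP => i; rewrite !mxE v0.
Qed.

End MxvecFamily.

Section Descent.
Variables (F : fieldType) (conj : {rmorphism F -> F}) (n : nat).
Variable sigma : 'M[F]_n -> 'M[F]_n.
Hypothesis sigmaD : forall u v, sigma (u + v) = sigma u + sigma v.
Hypothesis sigmaZ : forall (a : F) u, sigma (a *: u) = conj a *: sigma u.
Hypothesis sigmaK : involutive sigma.

Lemma K_dim_iff (S S' : 'M[F]_n -> Prop) d :
  (forall u, S u <-> S' u) -> K_dim conj S d -> K_dim conj S' d.
Proof.
move=> SS' [B [SB B_free B_span]]; exists B; split=> // [i|u /SS'].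
  exact/SS'.
exact: B_span.
Qed.

Lemma sigma_comb m (c : 'I_m -> F) (x : 'I_m -> 'M[F]_n) :
  sigma (\sum_i c i *: x i) = \sum_i conj (c i) *: sigma (x i).
Proof.
elim/big_rec2: _ => [|i y1 y2 _ <-]; last by rewrite sigmaD sigmaZ.
by rewrite -[0](scale0r 0) sigmaZ rmorph0 !scale0r.
Qed.

(* The coordinates of a fixed vector in a fixed basis are fixed by conj. *)
Lemma fixed_basis_K_dim (S : 'M[F]_n -> Prop) d (B : 'I_d -> 'M[F]_n) :
  (forall i, S (B i) /\ sigma (B i) = B i) ->
  (forall c, \sum_i c i *: B i = 0 -> forall i, c i = 0) ->
  (forall u, S u -> exists c, u = \sum_i c i *: B i) ->
  K_dim conj (fun u => S u /\ sigma u = u) d.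
Proof.
move=> B_fix B_free B_span; exists B; split => // [c _|u [/B_span[c ue] fu]].
  exact: B_free.
have ue' : u = \sum_i conj (c i) *: B i.
  by rewrite -fu ue sigma_comb; under eq_bigr do rewrite (B_fix _).2.
exists c; split => // i; apply/eqP; rewrite -subr_eq0; apply/eqP; move: i.
apply: B_free; under eq_bigr do rewrite scalerBl.
by rewrite sumrB -ue -ue' subrr.
Qed.

Variable theta : F.
Hypothesis theta_nK : conj theta != theta.
Variables (d : nat) (B : 'I_d -> 'M[F]_n) (S : 'M[F]_n -> Prop).
Hypothesis S_span : forall u, S u <-> exists c, u = \sum_i c i *: B i.
Hypothesis B_free : forall c, \sum_i c i *: B i = 0 -> forall i, c i = 0.
Hypothesis S_sigma : forall u, S u -> S (sigma u).

(* Fixed vectors spanning S over F, because theta is not in K (B_fixed_gen). *)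
Definition fixed_gen (k : 'I_(d + d)) : 'M[F]_n :=
  match split k with
  | inl i => B i + sigma (B i)
  | inr i => theta *: B i + sigma (theta *: B i)
  end.

Lemma fixed_gen_fixed k : sigma (fixed_gen k) = fixed_gen k.
Proof. by rewrite /fixed_gen; case: split => i; rewrite sigmaD sigmaK addrC. Qed.

Lemma S_fixed_gen k : S (fixed_gen k).
Proof.
have SD u v : S u -> S v -> S (u + v).
  move=> /S_span[c ->] /S_span[c' ->]; apply/S_span; exists (fun i => c i + c' i).
  by rewrite -big_split; apply: eq_bigr => i _; rewrite scalerDl.
have SZ a u : S u -> S (a *: u).
  move=> /S_span[c ->]; apply/S_span; exists (fun i => a * c i).
  by rewrite scaler_sumr; apply: eq_bigr => i _; rewrite scalerA.
have SB i : S (B i).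
  apply/S_span; exists (fun j => (i == j)%:R).
  rewrite (bigD1 i) //= eqxx scale1r big1 ?addr0 // => j; rewrite eq_sym => /negPf ->.
  by rewrite scale0r.
by rewrite /fixed_gen; case: split => i; apply: SD; do ?apply: S_sigma; do ?apply: SZ.
Qed.

Lemma B_fixed_gen i :
  B i = (conj theta - theta)^-1 *:
          (conj theta *: fixed_gen (lshift d i) - fixed_gen (rshift d i)).
Proof.
rewrite /fixed_gen -[lshift d i]/(unsplit (inl i)) -[rshift d i]/(unsplit (inr i)).
rewrite !unsplitK sigmaZ.
have -> : conj theta *: (B i + sigma (B i)) - (theta *: B i + conj theta *: sigma (B i))
    = (conj theta - theta) *: B i.
  by rewrite scalerDr opprD addrACA subrr addr0 scalerBl.
by rewrite scalerA mulVf ?scale1r // subr_eq0.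
Qed.

Lemma mxvec_fixed_gen_eq : (mxvec_family fixed_gen :=: mxvec_family B)%MS.
Proof.
apply/eqmxP/andP; split; apply/row_subP => k; rewrite rowK.
  by apply/sub_mxvec_familyP/S_span/S_fixed_gen.
rewrite B_fixed_gen !linearZ linearB !linearZ /= scalemx_sub // addmx_sub //.
  by rewrite scalemx_sub // -(rowK (fun k => mxvec (fixed_gen k))) row_sub.
by rewrite eqmx_opp -(rowK (fun k => mxvec (fixed_gen k))) row_sub.
Qed.

Lemma descent_K_dim : K_dim conj (fun u => S u /\ sigma u = u) d.
Proof.
pose W := mxvec_family fixed_gen; pose f := maxrankfun W.
have rW : \rank W = d.
  by rewrite mxvec_fixed_gen_eq; apply/eqP/row_free_mxvec_familyP.
have fam : rowsub f W = mxvec_family (fun k => fixed_gen (f k)).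
  by apply/row_matrixP => k; rewrite row_rowsub !rowK.
rewrite -rW; apply: (@fixed_basis_K_dim _ _ (fun k => fixed_gen (f k))).
- by move=> k; split; [exact: S_fixed_gen | exact: fixed_gen_fixed].
- by apply/row_free_mxvec_familyP; rewrite -fam maxrowsub_free.
move=> u /S_span/sub_mxvec_familyP uB; apply/sub_mxvec_familyP; rewrite -fam.
move/eqmxP: (eq_maxrowsub W) => /andP[_ /(submx_trans _)-> //].
by move/eqmxP: mxvec_fixed_gen_eq => /andP[_ /(submx_trans uB)].
Qed.

End Descent.

Section AdaptedBasis.
Variables (F : fieldType) (n : nat).
Local Notation pidm k := (pid_mx k : 'M[F]_n).

Lemma pid_mulmxE m k (X : 'M[F]_(n, m)) r c :
  (pidm k *m X) r c = if (r < k)%N then X r c else 0.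
Proof.
rewrite mxE (bigD1 r) //= big1 ?addr0; last first.
  by move=> l; rewrite mxE eq_sym => /negPf; rewrite -val_eqE /= => ->; rewrite mul0r.
by rewrite mxE eqxx /=; case: ifP; rewrite ?mul1r ?mul0r.
Qed.

Lemma mulmx_pidE m k (X : 'M[F]_(m, n)) r c :
  (X *m pidm k) r c = if (c < k)%N then X r c else 0.
Proof.
rewrite mxE (bigD1 c) //= big1 ?addr0; last first.
  by move=> l; rewrite mxE => /negPf; rewrite -val_eqE /= => ->; rewrite mulr0.
by rewrite mxE eqxx /=; case: ifP; rewrite ?mulr1 ?mulr0.
Qed.

Lemma row_pid_mulmx m k (X : 'M[F]_(n, m)) r :
  row r (pidm k *m X) = if (r < k)%N then row r X else 0.
Proof. by apply/rowP => c; rewrite mxE pid_mulmxE; case: ifP; rewrite !mxE. Qed.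

Lemma pid_mx_mulmx_le k j : (k <= j)%N -> pidm k *m pidm j = pidm k.
Proof. by move=> kj; rewrite mul_pid_mx (minn_idPl kj) pid_mx_minv. Qed.

(* Replace row k of P by a vector of B outside the span of the first k rows. *)
Lemma extend_basis1 k (P B : 'M[F]_n) :
  (pidm k *m P < B)%MS -> \rank (pidm k *m P) = k ->
  exists P' : 'M[F]_n, [/\ pidm k *m P' = pidm k *m P,
    (pidm k.+1 *m P' <= B)%MS & \rank (pidm k.+1 *m P') = k.+1].
Proof.
move=> ltAB rA; have kn : (k < n)%N.
  by move: ltAB; rewrite ltmxErank rA => /andP[_ /leq_trans->] //; apply: rank_leq_col.
move/andP: ltAB => [sAB nBA].
case/row_subPn: nBA => i nvA; pose v := row i B.
pose P' : 'M[F]_n := \matrix_(r, c) if r == k :> nat then v 0 c else P r c.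
have eqk : pidm k *m P' = pidm k *m P.
  apply/matrixP => r c; rewrite !pid_mulmxE; case: ifP => // rk.
  by rewrite mxE ltn_eqF.
have rowP' r : row r (pidm k.+1 *m P') =
    if (r < k)%N then row r (pidm k *m P) else if r == k :> nat then v else 0.
  rewrite !row_pid_mulmx ltnS; apply/rowP => c.
  by case: ltngtP => [rk|rk|/eqP rk]; rewrite !mxE ?rk // ltn_eqF.
have sA' : (pidm k *m P <= pidm k.+1 *m P')%MS.
  by rewrite -eqk -(pid_mx_mulmx_le (leqnSn k)) -mulmxA submxMl.
have sv' : (v <= pidm k.+1 *m P')%MS.
  by have := row_sub (Ordinal kn) (pidm k.+1 *m P'); rewrite rowP' ltnn /= eqxx.
exists P'; split => //.
  apply/row_subP => r; rewrite rowP'; case: ifP => _.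
    by rewrite (submx_trans (row_sub _ _)).
  by case: ifP => _; rewrite ?sub0mx // row_sub.
apply/eqP; rewrite eqn_leq (leq_trans (mxrankM_maxl _ _)) ?rank_pid_mx //=.
have : (pidm k *m P < pidm k.+1 *m P')%MS.
  by rewrite ltmxE sA' /=; apply: contra nvA => /(submx_trans sv').
by rewrite ltmxErank rA => /andP[].
Qed.

Lemma extend_basis l k (P B : 'M[F]_n) :
  (pidm k *m P <= B)%MS -> \rank (pidm k *m P) = k -> \rank B = (k + l)%N ->
  exists P' : 'M[F]_n,
    pidm k *m P' = pidm k *m P /\ (pidm (k + l) *m P' == B)%MS.
Proof.
elim: l k P => [|l IH] k P sAB rA rB.
  exists P; split => //; rewrite addn0.
  by rewrite -(eq_leqif (mxrank_leqif_eq sAB)) rA rB addn0.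
have ltAB : (pidm k *m P < B)%MS by rewrite ltmxErank sAB rA rB -addSnnS leq_addr.
have [P1 [e1 s1B r1]] := extend_basis1 ltAB rA.
have [P' [e' eB]] := IH k.+1 P1 s1B r1 (etrans rB (esym (addSnnS k l))).
exists P'; split; last by rewrite -addSnnS.
by rewrite -e1 -(pid_mx_mulmx_le (leqnSn k)) -!mulmxA e'.
Qed.

Lemma chain_monotone (G : nat -> 'M[F]_n) N :
  (forall j, (j < N)%N -> (G j <= G j.+1)%MS) ->
  forall i j, (i <= j <= N)%N -> (G i <= G j)%MS.
Proof.
move=> GS i j /andP[]; elim: j => [|j IH]; first by rewrite leqn0 => /eqP->.
rewrite leq_eqVlt => /orP[/eqP-> //|ij] jN.
by rewrite (submx_trans (IH ij (ltnW jN))) ?GS.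
Qed.

Lemma chain_adapted_basis (G : nat -> 'M[F]_n) N :
  (forall j, (j < N)%N -> (G j <= G j.+1)%MS) ->
  exists P : 'M[F]_n, forall j, (j <= N)%N -> (pidm (\rank (G j)) *m P == G j)%MS.
Proof.
elim: N => [|N IH] GS.
  have s0 : (pidm 0 *m (0 : 'M[F]_n) <= G 0)%MS by rewrite mulmx0 sub0mx.
  have r0 : \rank (pidm 0 *m (0 : 'M[F]_n)) = 0%N by rewrite mulmx0 mxrank0.
  have [P [_ eP]] := extend_basis s0 r0 erefl.
  by exists P => j; rewrite leqn0 => /eqP ->.
have [P HP] := IH (fun j jN => GS j (leqW jN)).
have /eqmxP eN := HP N (leqnn N).
have sN : (pidm (\rank (G N)) *m P <= G N.+1)%MS by rewrite eN GS.
have rN : \rank (pidm (\rank (G N)) *m P) = \rank (G N) by rewrite eN.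
have rNS : \rank (G N.+1) = (\rank (G N) + (\rank (G N.+1) - \rank (G N)))%N.
  by rewrite subnKC // mxrankS // GS.
have [P' [e1 e2]] := extend_basis sN rN rNS.
exists P' => j; rewrite leq_eqVlt => /orP[/eqP ->|jN]; first by rewrite -rNS in e2.
have GjN : (G j <= G N)%MS by apply: (chain_monotone GS); rewrite -ltnS jN leqnSn.
by rewrite -(pid_mx_mulmx_le (mxrankS GjN)) -mulmxA e1 mulmxA pid_mx_mulmx_le ?mxrankS ?HP.
Qed.

Lemma sub_pid_mxP k m (M : 'M[F]_(m, n)) :
  (M <= pidm k)%MS <-> (forall r (c : 'I_n), (k <= c)%N -> M r c = 0).
Proof.
split=> [/submxP[D ->] r c kc|M0]; first by rewrite mulmx_pidE ltnNge kc.
rewrite (_ : M = M *m pidm k) ?submxMl //.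
by apply/matrixP => r c; rewrite mulmx_pidE; case: ltnP => // /M0 ->.
Qed.

Lemma adapted_sub_mulmxP (P u : 'M[F]_n) a b : P \in unitmx ->
  (pidm a *m P *m u <= pidm b *m P)%MS <->
  (forall r c : 'I_n, (r < a)%N -> (b <= c)%N -> (P *m u *m invmx P) r c = 0).
Proof.
move=> Pu; have -> : pidm a *m P *m u = pidm a *m (P *m u *m invmx P) *m P.
  by rewrite -!mulmxA mulVmx // mulmx1.
rewrite submxMfree ?row_free_unit // sub_pid_mxP.
split=> H r c; last by move=> bc; rewrite pid_mulmxE; case: ifP => // ra; apply: H.
by move=> ra bc; have := H r c bc; rewrite pid_mulmxE ra.
Qed.

Definition pattern_pairs (allowed : 'I_n -> 'I_n -> bool) : pred ('I_n * 'I_n) :=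
  [pred rc | allowed rc.1 rc.2].

Definition pattern_basis (P : 'M[F]_n) allowed (k : 'I_#|pattern_pairs allowed|) :=
  invmx P *m delta_mx (enum_val k).1 (enum_val k).2 *m P.
Arguments pattern_basis P allowed k : clear implicits.

Lemma conj_mx_comb (P : 'M[F]_n) m (c : 'I_m -> F) (Y : 'I_m -> 'M[F]_n) :
  P *m (\sum_k c k *: Y k) *m invmx P = \sum_k c k *: (P *m Y k *m invmx P).
Proof.
rewrite mulmx_sumr mulmx_suml; apply: eq_bigr => k _.
by rewrite -scalemxAr -scalemxAl.
Qed.

Section Pattern.
Variables (P : 'M[F]_n) (allowed : 'I_n -> 'I_n -> bool).
Hypothesis P_unit : P \in unitmx.
Local Notation PB := (pattern_basis P allowed).

Lemma conj_pattern_basis k :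
  P *m PB k *m invmx P = delta_mx (enum_val k).1 (enum_val k).2.
Proof. by rewrite /pattern_basis !mulmxA mulmxV // mul1mx -mulmxA mulmxV // mulmx1. Qed.

Lemma conj_pattern_combE (c : 'I_#|pattern_pairs allowed| -> F) r0 c0 :
  (P *m (\sum_k c k *: PB k) *m invmx P) r0 c0 =
  \sum_k if enum_val k == (r0, c0) then c k else 0.
Proof.
rewrite conj_mx_comb summxE; apply: eq_bigr => k _.
rewrite conj_pattern_basis !mxE; case: (enum_val k) => r c1 /=.
by rewrite xpair_eqE (eq_sym r0) (eq_sym c0); case: (_ && _); rewrite ?mulr1 ?mulr0.
Qed.

Lemma pattern_spanP u :
  (forall r c, ~~ allowed r c -> (P *m u *m invmx P) r c = 0) <->
  exists c, u = \sum_k c k *: PB k.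
Proof.
split => [u0|[c ->] r0 c0 nal]; last first.
  rewrite conj_pattern_combE big1 // => k _; case: eqP => // ek.
  by move: (enum_valP k); rewrite ek unfold_in /= (negbTE nal).
set A := P *m u *m invmx P.
exists (fun k => A (enum_val k).1 (enum_val k).2).
have -> : u = invmx P *m A *m P.
  by rewrite /A !mulmxA mulVmx // mul1mx -mulmxA mulVmx // mulmx1.
rewrite {1}(matrix_sum_delta A) pair_bigA /=.
rewrite (bigID [in pattern_pairs allowed]) /= [X in _ + X]big1 ?addr0; last first.
  by case=> r c; rewrite inE /= => /u0 ->; rewrite scale0r.
rewrite (big_enum_val (fun p => A p.1 p.2 *: delta_mx p.1 p.2)) /=.
rewrite mulmx_sumr mulmx_suml; apply: eq_bigr => k _.
by rewrite /pattern_basis -scalemxAr -scalemxAl.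
Qed.

Lemma pattern_basis_free c : \sum_k c k *: PB k = 0 -> forall k, c k = 0.
Proof.
move=> /(congr1 (fun X => P *m X *m invmx P)) /matrixP c0 k.
have := c0 (enum_val k).1 (enum_val k).2.
rewrite conj_pattern_combE mulmx0 mul0mx mxE => <-.
rewrite (bigD1 k) //= -surjective_pairing eqxx big1 ?addr0 //.
by move=> j /negPf jk; case: eqP => // /enum_val_inj ej; rewrite ej eqxx in jk.
Qed.

End Pattern.
End AdaptedBasis.

Section NilpotentStable.
Variables (F : fieldType) (n : nat).
Implicit Types (A B u : 'M[F]_n) (x : 'rV[F]_n).

Lemma sub_addsmx_rVP m1 m2 (X : 'M[F]_(m1, n)) (Y : 'M[F]_(m2, n)) z :
  (z <= X + Y)%MS -> exists x y, [/\ (x <= X)%MS, (y <= Y)%MS & z = x + y].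
Proof. by case/sub_addsmxP => [[u1 u2] ->]; exists (u1 *m X), (u2 *m Y); rewrite !submxMl. Qed.

Lemma mulmx_sub_rV m1 m2 (X : 'M[F]_(m1, n)) (Y : 'M[F]_(m2, n)) u :
  (forall x, (x <= X)%MS -> (x *m u <= Y)%MS) -> (X *m u <= Y)%MS.
Proof. by move=> H; apply/row_subP => i; rewrite row_mul H ?row_sub. Qed.

Lemma stable_mulmx_exp A u : (A *m u <= A)%MS -> forall k, (A *m u ^+ k <= A)%MS.
Proof.
move=> Au; elim => [|k IH]; first by rewrite expr0 mulmx1.
by rewrite exprSr -mulmxE mulmxA (submx_trans _ Au) // submxMr.
Qed.

(* A nilpotent map acts as 0 on the line B / A. *)
Lemma nilpotent_stable_codim1 A B u K :
  (A <= B)%MS -> \rank B = (\rank A).+1 -> (A *m u <= A)%MS ->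
  (B *m u <= B)%MS -> u ^+ K = 0 -> (B *m u <= A)%MS.
Proof.
move=> sAB rB Au Bu uK.
have /row_subPn[j nvA] : ~~ (B <= A)%MS by apply/negP => /mxrankS; rewrite rB ltnn.
set v := row j B in nvA; have vB : (v <= B)%MS := row_sub j B.
have eB : (A + v == B)%MS.
  have sAvB : (A + v <= B)%MS by rewrite addsmx_sub sAB vB.
  rewrite -(eq_leqif (mxrank_leqif_eq sAvB)) eqn_leq (mxrankS sAvB) rB.
  have : (A < A + v)%MS.
    by rewrite ltmxE addsmxSl; apply: contra nvA; apply: submx_trans; exact: addsmxSr.
  by rewrite ltmxErank => /andP[].
have [a [c [aA /sub_rVP[lam ->] e]]] : exists a c, [/\ (a <= A)%MS, (c <= v)%MS & v *m u = a + c].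
  by apply: sub_addsmx_rVP; rewrite (eqmxP eB) (submx_trans _ Bu) // submxMr.
have vuk k : exists2 ak, (ak <= A)%MS & v *m u ^+ k = ak + lam ^+ k *: v.
  elim: k => [|k [ak akA ek]]; first by exists 0; rewrite ?sub0mx // expr0 mulmx1 scale1r add0r.
  exists (ak *m u + lam ^+ k *: a).
    by rewrite addmx_sub ?scalemx_sub // (submx_trans _ Au) // submxMr.
  rewrite exprSr -mulmxE mulmxA ek mulmxDl -scalemxAl e scalerDr addrA.
  by rewrite scalerA -exprSr.
have lam0 : lam = 0.
  have [aK aKA] := vuk K.+1; rewrite exprSr uK mul0r mulmx0 => /esym /eqP.
  rewrite addr_eq0 => /eqP eK; apply/eqP; have := expf_eq0 lam K.+1; rewrite /= => <-.
  apply: contraR nvA => nz; rewrite -[v](scalerK nz) scalemx_sub //.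
  by rewrite (_ : _ *: v = - aK) ?eqmx_opp // eK opprK.
move: e; rewrite lam0 scale0r addr0 => e.
apply: mulmx_sub_rV => w; rewrite -(eqmxP eB) => /sub_addsmx_rVP[a1 [c1 [a1A /sub_rVP[mu ->] ->]]].
rewrite mulmxDl -scalemxAl e addmx_sub ?scalemx_sub //.
by rewrite (submx_trans _ Au) // submxMr.
Qed.

End NilpotentStable.

Section HermitianForm.
Variables (F : fieldType) (conj : {rmorphism F -> F}) (n : nat).
Hypothesis conjK : involutive conj.
Variable b : 'rV[F]_n -> 'rV[F]_n -> F.
Hypothesis b_sesq : sesq_form conj b.
Hypothesis b_herm : herm_form conj b.
Hypothesis b_nondeg : sesq_nondegenerate b.
Implicit Types (x y : 'rV[F]_n) (u v : 'M[F]_n).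

Lemma bDl x x' y : b (x + x') y = b x y + b x' y.
Proof. by have := b_sesq.1 1 x x' y; rewrite scale1r rmorph1 mul1r. Qed.
Lemma b0l y : b 0 y = 0.
Proof. by have := bDl 0 0 y; rewrite addr0 => /(canLR (addrK _)); rewrite subrr. Qed.
Lemma bZl a x y : b (a *: x) y = conj a * b x y.
Proof. by have := b_sesq.1 a x 0 y; rewrite !addr0 b0l addr0. Qed.
Lemma bDr x y y' : b x (y + y') = b x y + b x y'.
Proof. by have := b_sesq.2 1 x y y'; rewrite scale1r mul1r. Qed.
Lemma b0r x : b x 0 = 0.
Proof. by have := bDr x 0 0; rewrite addr0 => /(canLR (addrK _)); rewrite subrr. Qed.
Lemma bZr a x y : b x (a *: y) = a * b x y.
Proof. by have := b_sesq.2 a x y 0; rewrite !addr0 b0r addr0. Qed.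
Lemma bBr x y y' : b x (y - y') = b x y - b x y'.
Proof. by rewrite bDr -scaleN1r bZr mulN1r. Qed.
Lemma b_suml I (r : seq I) (P : pred I) (f : I -> 'rV[F]_n) y :
  b (\sum_(i <- r | P i) f i) y = \sum_(i <- r | P i) b (f i) y.
Proof. by elim/big_rec2: _ => [|i y1 y2 _ <-]; rewrite ?b0l ?bDl. Qed.
Lemma b_sumr I (r : seq I) (P : pred I) (f : I -> 'rV[F]_n) x :
  b x (\sum_(i <- r | P i) f i) = \sum_(i <- r | P i) b x (f i).
Proof. by elim/big_rec2: _ => [|i y1 y2 _ <-]; rewrite ?b0r ?bDr. Qed.

Lemma b_inj y y' : (forall x, b x y = b x y') -> y = y'.
Proof.
move=> H; apply/eqP; rewrite -subr_eq0; apply/eqP/b_nondeg => x.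
by rewrite bBr H subrr.
Qed.

Lemma mulmx_rV_inj u v : (forall y : 'rV_n, y *m u = y *m v) -> u = v.
Proof. by move=> H; apply/row_matrixP => i; rewrite !rowE H. Qed.

Definition gram : 'M[F]_n := \matrix_(k, l) b (delta_mx 0 k) (delta_mx 0 l).

Lemma b_gram x y : b x y = (map_mx conj x *m gram *m y^T) 0 0.
Proof.
rewrite {1}(row_sum_delta x) {1}(row_sum_delta y) b_suml.
rewrite mxE; under [RHS]eq_bigr do rewrite !mxE big_distrl /=.
rewrite exchange_big /=; apply: eq_bigr => k _.
rewrite bZl b_sumr big_distrr /=; apply: eq_bigr => l _.
by rewrite bZr !mxE [y 0 l * _]mulrC mulrA.
Qed.

Lemma gram_unit : gram \in unitmx.
Proof.
rewrite -unitmx_tr -row_free_unit; apply: inj_row_free => v vG.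
have e : gram *m v^T = (v *m gram^T)^T by rewrite trmx_mul trmxK.
by apply: b_nondeg => x; rewrite b_gram -mulmxA e vG trmx0 mulmx0 mxE.
Qed.

Definition adjoint u : 'M[F]_n := (invmx gram *m map_mx conj u *m gram)^T.

Lemma adjointP u x y : b (x *m u) y = b x (y *m adjoint u).
Proof.
by rewrite !b_gram /adjoint trmx_mul trmxK !mulmxA mulmxK ?gram_unit // map_mxM.
Qed.

Lemma adjointPl u x y : b (x *m adjoint u) y = b x (y *m u).
Proof. by rewrite [LHS]b_herm -adjointP [b (y *m u) x]b_herm conjK. Qed.

Lemma adjointK : involutive adjoint.
Proof. by move=> u; apply: mulmx_rV_inj => y; apply: b_inj => x; rewrite -adjointP adjointPl. Qed.

Lemma adjointD u v : adjoint (u + v) = adjoint u + adjoint v.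
Proof. by rewrite /adjoint map_mxD mulmxDr mulmxDl raddfD. Qed.

Lemma adjointZ a u : adjoint (a *: u) = conj a *: adjoint u.
Proof.
rewrite /adjoint map_mxZ -scalemxAr -scalemxAl.
by apply/matrixP => i j; rewrite !mxE.
Qed.

Lemma b_hermitianE u : b_hermitian b u <-> adjoint u = u.
Proof.
split=> [hu|au x y]; last by rewrite adjointP au.
by apply: mulmx_rV_inj => y; apply: b_inj => x; rewrite -adjointP hu.
Qed.

Lemma b_hermitian_exp u : b_hermitian b u ->
  forall k x y, b (x *m u ^+ k) y = b x (y *m u ^+ k).
Proof.
move=> hu; elim => [|k IH] x y; first by rewrite expr0 !mulmx1.
by rewrite [in LHS]exprSr [in RHS]exprS -!mulmxE !mulmxA hu IH.
Qed.

Definition perp m (X : 'M[F]_(m, n)) : 'M[F]_n := kermx ((map_mx conj X *m gram)^T).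

Lemma perpP m (X : 'M[F]_(m, n)) y :
  (y <= perp X)%MS <-> (forall x, (x <= X)%MS -> b x y = 0).
Proof.
have e : y *m (map_mx conj X *m gram)^T = (map_mx conj X *m gram *m y^T)^T.
  by rewrite (trmx_mul _ y^T) trmxK.
rewrite /perp sub_kermx e trmx_eq0; split.
  move=> /eqP X0 x /submxP[D ->]; rewrite b_gram map_mxM -!mulmxA.
  by rewrite [map_mx conj X *m _]mulmxA X0 mulmx0 mxE.
move=> H; apply/eqP/matrixP => i j; rewrite ord1 [RHS]mxE.
have : (row i (map_mx conj X *m gram *m y^T)) 0 0 = 0.
  by rewrite !row_mul -map_row -b_gram H ?row_sub.
by rewrite mxE.
Qed.

Lemma perp_sym m (X : 'M[F]_(m, n)) x y :
  (y <= perp X)%MS -> (x <= X)%MS -> b y x = 0.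
Proof. by move=> /perpP H xX; rewrite b_herm H // rmorph0. Qed.

Lemma mxrank_perp m (X : 'M[F]_(m, n)) : \rank (perp X) = (n - \rank X)%N.
Proof.
rewrite mxrank_ker mxrank_tr mxrankMfree ?mxrank_map //.
by rewrite row_free_unit gram_unit.
Qed.

Lemma perpK (X : 'M[F]_n) : (perp (perp X) :=: X)%MS.
Proof.
apply/eqmx_sym/eqmxP; rewrite -(eq_leqif (mxrank_leqif_eq _)).
  by rewrite !mxrank_perp subKn ?rank_leq_col.
by apply/rV_subP => x xX; apply/perpP => y yp; exact: perp_sym yp xX.
Qed.

Lemma perpS m1 m2 (X : 'M[F]_(m1, n)) (Y : 'M[F]_(m2, n)) :
  (X <= Y)%MS -> (perp Y <= perp X)%MS.
Proof.
move=> sXY; apply/rV_subP => y /perpP H; apply/perpP => x xX.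
by apply: H; rewrite (submx_trans xX).
Qed.

Lemma perp_stable u (X : 'M[F]_n) :
  b_hermitian b u -> (X *m u <= X)%MS -> (perp X *m u <= perp X)%MS.
Proof.
move=> hu Xu; apply: mulmx_sub_rV => y /perpP H; apply/perpP => x xX.
by rewrite -hu H // (submx_trans _ Xu) // submxMr.
Qed.

Lemma adjoint_mulmx_sub u (X Y : 'M[F]_n) :
  (perp Y *m u <= perp X)%MS -> (X *m adjoint u <= Y)%MS.
Proof.
move=> H; suff: (X *m adjoint u <= perp (perp Y))%MS by rewrite perpK.
apply: mulmx_sub_rV => a aX.
apply/perpP => y yY; rewrite -adjointP; apply: (perp_sym _ aX).
by rewrite (submx_trans _ H) // submxMr.
Qed.

Variables (nu : nat) (E : 'M[F]_n).
Hypothesis E_rank : \rank E = nu.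
Hypothesis E_sing : totally_singular b E.
Hypothesis witt_max : forall X : 'M[F]_n, totally_singular b X -> (\rank X <= nu)%N.

Lemma singular_sub_perp : (E <= perp E)%MS.
Proof. by apply/rV_subP => y yE; apply/perpP => x xE; apply: E_sing. Qed.

Lemma witt_index_le : (nu + nu <= n)%N.
Proof.
have := mxrankS singular_sub_perp; rewrite mxrank_perp E_rank.
by have := rank_leq_col E; rewrite E_rank; lia.
Qed.

(* Otherwise E + x would be a larger totally singular subspace. *)
Lemma isotropic_perp_sub x : (x <= perp E)%MS -> b x x = 0 -> (x <= E)%MS.
Proof.
move=> xP xx.
have ts : totally_singular b (E + x)%MS.
  move=> z w /sub_addsmx_rVP[e1 [c1 [e1E /sub_rVP[a ->] ->]]].
  move=> /sub_addsmx_rVP[e2 [c2 [e2E /sub_rVP[c ->] ->]]].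
  rewrite !bDl !bDr !bZl !bZr xx E_sing // (perp_sym xP) //.
  by move/perpP: xP => ->; rewrite // !mulr0 !addr0.
have sEX : (E <= E + x)%MS := addsmxSl E x.
have XE : (E + x <= E)%MS.
  by rewrite -(eq_leqif (mxrank_leqif_sup sEX)) eqn_leq mxrankS // E_rank witt_max.
exact: submx_trans (addsmxSr E x) XE.
Qed.

(* If y u^(j+1) lies in E for all y in E^perp, so does y u^j (j > 0), since
   b(y u^j, y u^j) = b(y, y u^(j+1) u^(j-1)) = 0. *)
Lemma nilpotent_hermitian_perp_sub u K :
  b_hermitian b u -> (E *m u <= E)%MS -> u ^+ K = 0 -> (perp E *m u <= E)%MS.
Proof.
move=> hu Eu uK; have Pu := perp_stable hu Eu.
pose Q j := forall y, (y <= perp E)%MS -> (y *m u ^+ j <= E)%MS.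
have QS j : (0 < j)%N -> Q j.+1 -> Q j.
  move=> j0 Qj y yP; apply: isotropic_perp_sub.
    by rewrite (submx_trans _ (stable_mulmx_exp Pu j)) // submxMr.
  rewrite b_hermitian_exp // -mulmxA mulmxE -exprD (_ : (j + j = j.+1 + j.-1)%N); last lia.
  rewrite exprD -mulmxE mulmxA (perp_sym yP) //.
  by rewrite (submx_trans _ (stable_mulmx_exp Eu j.-1)) // submxMr // Qj.
have Q_high k : Q (K - k).+1.
  elim: k => [|k IH]; first by move=> y _; rewrite subn0 exprSr uK mul0r mulmx0 sub0mx.
  have [kK|Kk] := ltnP k K; last by rewrite (_ : (K - k.+1 = K - k)%N) //; lia.
  by apply: QS => //; rewrite (_ : (K - k.+1).+2 = (K - k).+1); last lia.
by apply: mulmx_sub_rV => y /(Q_high K); rewrite subnn expr1.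
Qed.

Variable Fl : nat -> 'M[F]_n.
Hypothesis Fl_flag : forall i, (i < nu)%N -> (Fl i <= Fl i.+1)%MS.
Hypothesis Fl_rank : forall i, (i <= nu)%N -> \rank (Fl i) = i.
Hypothesis Fl_top : Fl nu = E.

Local Notation N := (nu + nu).+1.

Definition flag_chain j := if (j <= nu)%N then Fl j else perp (Fl (N - j)).

Definition lowers_chain u :=
  forall j, (0 < j <= N)%N -> (flag_chain j *m u <= flag_chain j.-1)%MS.

Lemma flag_chainS j : (j < N)%N -> (flag_chain j <= flag_chain j.+1)%MS.
Proof.
rewrite /flag_chain => jN; case: (ltngtP j nu) => [jnu|nuj|->].
- exact: Fl_flag.
- by apply: perpS; rewrite (_ : (N - j = (N - j.+1).+1)%N) ?Fl_flag //; lia.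
- by rewrite (_ : (N - nu.+1 = nu)%N) ?Fl_top ?singular_sub_perp //; lia.
Qed.

Lemma Fl0 : Fl 0 = 0.
Proof. by apply/eqP; rewrite -mxrank_eq0 Fl_rank. Qed.

Lemma mxrank_flag_chain j : (j <= N)%N -> \rank (flag_chain j) = chain_dim nu n j.
Proof.
rewrite /flag_chain /chain_dim => jN; case: ifP => hj; first by rewrite Fl_rank.
by rewrite mxrank_perp Fl_rank //; lia.
Qed.

Lemma perp_flag_chain j : (j <= N)%N -> (perp (flag_chain j) :=: flag_chain (N - j))%MS.
Proof.
rewrite /flag_chain => jN; case: ifP => hj; first by rewrite ifF ?subKn //; lia.
by rewrite ifT; [exact: perpK | lia].
Qed.

Lemma adjoint_lowers_dual u j : (0 < j <= N)%N ->
  (flag_chain (N - j).+1 *m u <= flag_chain (N - j))%MS ->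
  (flag_chain j *m adjoint u <= flag_chain j.-1)%MS.
Proof.
move=> /andP[j0 jN] lu; apply: adjoint_mulmx_sub.
have j1N : (j.-1 <= N)%N by lia.
rewrite (eqmxMr u (perp_flag_chain j1N)) (perp_flag_chain jN).
by rewrite (_ : (N - j.-1 = (N - j).+1)%N); last lia.
Qed.

Lemma adjoint_lowers_chain u : lowers_chain u -> lowers_chain (adjoint u).
Proof.
move=> lu j hj; apply: adjoint_lowers_dual => //.
by rewrite -[(N - j)%N]/((N - j).+1.-1)%N; apply: lu; lia.
Qed.

Lemma lowers_chainD u v : lowers_chain u -> lowers_chain v -> lowers_chain (u + v).
Proof. by move=> lu lv j hj; rewrite mulmxDr addmx_sub ?lu ?lv. Qed.

Lemma lowers_chainZ a u : lowers_chain u -> lowers_chain (a *: u).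
Proof. by move=> lu j hj; rewrite -scalemxAr scalemx_sub ?lu. Qed.

Lemma lowers_chain_nilpotent u : lowers_chain u -> u ^+ N = 0.
Proof.
move=> lu; have low k : (k <= N)%N -> (flag_chain N *m u ^+ k <= flag_chain (N - k))%MS.
  elim: k => [|k IH] kN; first by rewrite expr0 mulmx1 subn0.
  rewrite exprSr -mulmxE mulmxA (submx_trans (submxMr u (IH (ltnW kN)))) //.
  by rewrite (_ : (N - k.+1 = (N - k).-1)%N) ?lu //; lia.
have full : row_full (flag_chain N).
  by rewrite /row_full mxrank_flag_chain // /chain_dim ifF ?subnn ?subn0 //; lia.
have := low N (leqnn N); rewrite subnn /flag_chain /= Fl0 submx0 => /eqP chainN0.
apply/eqP; rewrite -submx0 -chainN0.
by rewrite -{1}[u ^+ N]mul1mx submxMr // submx_full.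
Qed.

Lemma WH_lowers_lower_half u : WH b nu Fl u ->
  forall j, (0 < j <= nu.+1)%N -> (flag_chain j *m u <= flag_chain j.-1)%MS.
Proof.
case=> [[K uK] hu Fl_u] [//|i] /=; rewrite ltnS leq_eqVlt => /orP[/eqP->|inu].
  rewrite /flag_chain ltnn leqnn (_ : (N - nu.+1 = nu)%N); last lia.
  by rewrite Fl_top; apply: (nilpotent_hermitian_perp_sub hu _ uK); rewrite -Fl_top Fl_u.
rewrite /flag_chain inu ltnW //; apply: (nilpotent_stable_codim1 (K := K)) => //.
- exact: Fl_flag.
- by rewrite !Fl_rank // ltnW.
- by rewrite Fl_u // ltnW.
- by rewrite Fl_u.
Qed.

Lemma WH_lowers_chain u : WH b nu Fl u -> lowers_chain u.
Proof.
move=> Wu j /andP[j0 jN]; have [jnu|nuj] := leqP j nu.+1.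
  by apply: WH_lowers_lower_half => //; rewrite j0.
have /b_hermitianE au : b_hermitian b u by case: Wu.
rewrite -au; apply: adjoint_lowers_dual; first by rewrite j0.
by apply: (WH_lowers_lower_half Wu); lia.
Qed.

Lemma lowers_chain_WH u : lowers_chain u -> adjoint u = u -> WH b nu Fl u.
Proof.
move=> lu au; split; [by exists N; exact: lowers_chain_nilpotent | exact/b_hermitianE |].
case=> [|i] inu; first by rewrite Fl0 mul0mx sub0mx.
have iN : (0 < i.+1 <= N)%N by lia.
have := lu _ iN; rewrite /flag_chain inu ltnW //= => /submx_trans; apply.
exact: Fl_flag.
Qed.

Lemma WH_lowersE u : WH b nu Fl u <-> lowers_chain u /\ adjoint u = u.
Proof.
split=> [Wu|[]]; last exact: lowers_chain_WH.
by split; [exact: WH_lowers_chain | apply/b_hermitianE; case: Wu].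
Qed.

Definition chain_pattern (r c : 'I_n) : bool := (c < row_width nu n r)%N.

Lemma lowers_chain_coordP (P : 'M[F]_n) : P \in unitmx ->
  (forall j, (j <= N)%N -> ((pid_mx (\rank (flag_chain j)) : 'M[F]_n) *m P == flag_chain j)%MS) ->
  forall u, lowers_chain u <->
    (forall r c, ~~ chain_pattern r c -> (P *m u *m invmx P) r c = 0).
Proof.
move=> P_unit P_adapted u.
have stepP j : (0 < j <= N)%N -> (flag_chain j *m u <= flag_chain j.-1)%MS <->
    (forall r c : 'I_n, (r < chain_dim nu n j)%N -> (chain_dim nu n j.-1 <= c)%N ->
       (P *m u *m invmx P) r c = 0).
  move=> /andP[j0 jN]; have j1N : (j.-1 <= N)%N by lia.
  rewrite (eqmx_sym (eqmxMr u (eqmxP (P_adapted j jN)))).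
  rewrite (eqmx_sym (eqmxP (P_adapted _ j1N))).
  by rewrite !mxrank_flag_chain //; apply: adapted_sub_mulmxP.
have nu2 := witt_index_le.
split=> [lu r c | u0 j hj].
  rewrite /chain_pattern -leqNgt => /(row_width_leP nu2 c (ltn_ord r))[j [hj rj cj]].
  by have /(stepP j hj) := lu j hj; apply.
apply/(stepP j hj) => r c rj cj; apply: u0; rewrite /chain_pattern -leqNgt.
by apply/(row_width_leP nu2 c (ltn_ord r)); exists j.
Qed.

Lemma card_chain_pattern :
  #|pattern_pairs chain_pattern| = (nu * (2 * n - 2 * nu - 1))%N.
Proof.
rewrite -(sum_row_width witt_index_le) -sum1_card big_mkcond /=.
rewrite -(pair_bigA _ (fun r c => if (r, c) \in pattern_pairs chain_pattern then 1 else 0)%N).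
apply: eq_bigr => r _ /=.
have -> : \sum_(c < n) (if (r, c) \in pattern_pairs chain_pattern then 1 else 0)
    = \sum_(c < n) (c < row_width nu n r : nat).
  by apply: eq_bigr => c _; rewrite unfold_in /chain_pattern /=; case: ifP.
rewrite sum_ord_ltn; apply/minn_idPl.
by have := witt_index_le; have := ltn_ord r; rewrite /row_width; case: ifP => _; try case: ifP => _; lia.
Qed.

Lemma WH_K_subspace : K_subspace conj (WH b nu Fl).
Proof.
split=> [|u v|k u kK]; rewrite !WH_lowersE.
- split; first by move=> j _; rewrite mulmx0 sub0mx.
  by rewrite /adjoint map_mx0 mulmx0 mul0mx trmx0.
- by move=> [lu au] [lv av]; rewrite adjointD au av; split=> //; exact: lowers_chainD.
- by move=> [lu au]; rewrite adjointZ kK au; split=> //; exact: lowers_chainZ.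
Qed.

Lemma WH_K_dim : (exists a : F, conj a != a) ->
  K_dim conj (WH b nu Fl) (nu * (2 * n - 2 * nu - 1))%N.
Proof.
move=> [theta theta_nK].
have [P P_adapted] := chain_adapted_basis flag_chainS.
have chainN_full : \rank (flag_chain N) = n.
  by rewrite mxrank_flag_chain // /chain_dim ifF ?subnn ?subn0 //; lia.
have P_unit : P \in unitmx.
  have /eqmxP := P_adapted N (leqnn N); rewrite chainN_full pid_mx_1 mul1mx => PN.
  by rewrite -row_full_unit /row_full PN chainN_full.
rewrite -card_chain_pattern; apply: K_dim_iff (fun u => iff_sym (WH_lowersE u)) _.
apply: (descent_K_dim adjointD adjointZ adjointK theta_nK _ (pattern_basis_free P_unit)).
  by move=> u; apply: iff_trans (lowers_chain_coordP P_unit P_adapted u) (pattern_spanP _ P_unit u).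
exact: adjoint_lowers_chain.
Qed.

End HermitianForm.

Theorem mainTheorem18 (F : fieldType) (conj : {rmorphism F -> F})
    (conj_invol : involutive conj) (conj_nonid : exists x : F, conj x != x)
    (n : nat) (b : 'rV[F]_n -> 'rV[F]_n -> F)
    (b_sesq : sesq_form conj b) (b_herm : herm_form conj b)
    (b_nondeg : sesq_nondegenerate b)
    (nu : nat) (b_witt : witt_index b nu)
    (p : nat) (Fl : nat -> 'M[F]_n)
    (Fl_max : maximal_pc_singular_flag b nu p Fl) :
  K_subspace conj (WH b p Fl) /\
  K_dim conj (WH b p Fl) (nu * (2 * n - 2 * nu - 1))%N.
Proof.
case: Fl_max => Fl_flag Fl_rank Fl_sing p_nu; subst p.
have [_ witt_max] := b_witt; have E_rank := Fl_rank nu (leqnn nu).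
split; first exact: (WH_K_subspace b_sesq b_herm b_nondeg E_rank Fl_sing witt_max
                       Fl_flag Fl_rank erefl).
exact: (WH_K_dim conj_invol b_sesq b_herm b_nondeg E_rank Fl_sing witt_max
          Fl_flag Fl_rank erefl conj_nonid).
Qed.
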